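(* Let $p\geq 3$ be a prime, $u\in\{1,\ldots,p-1\}$ and $s\geq 2$ an integer. Suppose that $\nu_{p}\big(A_{p,(p-1)(up^s-1)}(m)\big)\leq s$ for all integers $m>up^{s}$. Then for every integer $n>up^{s}$, $$\nu_{p}\big(A_{p,(p-1)(up^s-1)}(pn)\big)=\nu_{p}\big(A_{p,(p-1)(up^s-1)}(pn+1)\big)=\cdots=\nu_{p}\big(A_{p,(p-1)(up^s-1)}(pn+p-1)\big).$$
   Context: For an integer $m\geq 2$ and a positive integer $k$, the integers $A_{m,k}(n)$, $n\in\mathbb{N}=\{0,1,2,\ldots\}$, are defined by the formal power series identity $\prod_{i=0}^{\infty}\big(1-x^{m^{i}}\big)^{-k}=\sum_{n=0}^{\infty}A_{m,k}(n)x^{n}$. For a prime $p$, $\nu_p(n)$ denotes the $p$-adic valuation of the integer $n$, with $\nu_p(0)=+\infty$. *)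

From mathcomp Require Import all_boot all_order all_algebra.
Set Implicit Arguments. Unset Strict Implicit. Unset Printing Implicit Defensive.
Import GRing.Theory Num.Theory.
Local Open Scope ring_scope.

(* Truncation of prod_{i>=0} (1 - x^(m^i))^(-k): for i <= n and j <= n we keep
   the terms C(j+k-1, j) x^(m^i * j) of (1 - x^(m^i))^(-k).  Since m >= 2,
   factors with i > n and terms of degree > n do not affect the coefficient
   of x^n, which is A_{m,k}(n). *)
Definition Atrunc (m k n : nat) : {poly int} :=
  \prod_(i < n.+1) \sum_(j < n.+1) ('C(j + k - 1, j))%:R *: 'X^(m ^ i * j).

Definition A (m k n : nat) : int := (Atrunc m k n)`_n.

(* p-adic valuation on integers, with nu_p(0) = +oo encoded as None. *)
Definition nu (p : nat) (z : int) : option nat :=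
  if z == 0 then None else Some (logn p `|z|%N).

From mathcomp Require Import all_boot all_order all_algebra ring zify.
Import GRing.Theory Num.Theory.
Local Open Scope ring_scope.

(* Writing F_k(x) = prod_i (1 - x^(p^i))^(-k), one has F_k(x) = (1 - x)^(-k) F_k(x^p).
   For k = (p-1)(u p^s - 1) we have k + (p - 1) = p^s w with w = (p-1)u, and
   (1 - x)^(p^s w) = (1 - x^p)^(p^(s-1) w) mod p^s.  Hence
   F_k(x) = (1 - x)^(p-1) G(x^p) mod p^s for an integer series G, so that
   A(pn + j) = (-1)^j C(p-1, j) A(pn) mod p^s.  The binomial factor is prime to p,
   and two integers of p-adic valuation at most s that agree mod p^s up to a
   p-adic unit have the same valuation. *)

Definition dvd_coefs (d : int) (R : {poly int}) := forall i, (d %| R`_i)%Z.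

Section DivisibleCoefficients.

Implicit Types (d e : int) (R S : {poly int}).

Lemma dvd_coefsMl d R S : dvd_coefs d R -> dvd_coefs d (S * R).
Proof. by move=> dR i; rewrite coefM rpred_sum // => j _; apply/dvdz_mull/dR. Qed.

Lemma dvd_coefsMr d R S : dvd_coefs d R -> dvd_coefs d (R * S).
Proof. by rewrite mulrC; apply: dvd_coefsMl. Qed.

Lemma dvd_coefsM d e R S :
  dvd_coefs d R -> dvd_coefs e S -> dvd_coefs (d * e) (R * S).
Proof. by move=> dR eS i; rewrite coefM rpred_sum // => j _; apply: dvdz_mul. Qed.

Lemma dvd_coefsX d R n : dvd_coefs d R -> dvd_coefs (d ^+ n) (R ^+ n).
Proof.
move=> dR; elim: n => [|n IH]; first by move=> i; rewrite expr0 dvd1z.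
by rewrite !exprS; apply: dvd_coefsM.
Qed.

Lemma dvd_coefsMn d e R m :
  (e %| m%:Z)%Z -> dvd_coefs d R -> dvd_coefs (d * e) (R *+ m).
Proof. by move=> em dR i; rewrite coefMn -mulr_natr natz dvdz_mul. Qed.

Lemma dvd_coefs_trans d e R : (e %| d)%Z -> dvd_coefs d R -> dvd_coefs e R.
Proof. by move=> ed dR i; apply: dvdz_trans ed (dR i). Qed.

Lemma dvd_coefs_sum d I (r : seq I) (P : pred I) (F : I -> {poly int}) :
  (forall i, P i -> dvd_coefs d (F i)) -> dvd_coefs d (\sum_(i <- r | P i) F i).
Proof. by move=> dF k; rewrite coef_sum rpred_sum // => i /dF. Qed.

Lemma dvd_coefs_subX d R S n : dvd_coefs d (R - S) -> dvd_coefs d (R ^+ n - S ^+ n).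
Proof. by move=> dRS; rewrite subrXX; apply: dvd_coefsMr. Qed.

End DivisibleCoefficients.

Lemma coef_1subX_exp m i : ((1 - 'X : {poly int}) ^+ m)`_i = (-1) ^+ i * 'C(m, i)%:R.
Proof.
rewrite exprDn.
have -> : \sum_(j < m.+1) ((1 : {poly int}) ^+ (m - j) * (- 'X) ^+ j) *+ 'C(m, j)
    = \sum_(j < m.+1) ((-1) ^+ j * 'C(m, j)%:R) *: 'X^j.
  apply: eq_bigr => j _.
  by rewrite expr1n mul1r -scaleN1r exprZn -scaler_nat scalerA mulrC.
rewrite -(poly_def m.+1 (fun j => (-1) ^+ j * 'C(m, j)%:R)) coef_poly.
by case: ltnP => // mi; rewrite bin_small // mulr0.
Qed.

Lemma dvd_coefs_1subX_prime p :
  prime p -> dvd_coefs p%:Z ((1 - 'X) ^+ p - (1 - 'X^p)).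
Proof.
move=> p_pr i; rewrite coefB coef_1subX_exp coefB coef1 coefXn.
case: (ltngtP i p) => [ip|pi|->].
- case: i ip => [|i] ip; first by rewrite bin0 mulr1 subrr.
  by rewrite !subr0 dvdz_mull // natz dvdzE /= prime_dvd_bin.
- by rewrite bin_small // mulr0 !gtn_eqF // (leq_ltn_trans (leq0n p) pi).
- (* the coefficient of x^p is (-1)^p + 1: 0 for odd p and 2 for p = 2 *)
  rewrite binn gtn_eqF ?prime_gt0 //= mulr1 sub0r opprK.
  case: (even_prime p_pr) => [->|p_odd]; first by rewrite dvdzz.
  by rewrite -signr_odd p_odd expr1 addNr.
Qed.

Lemma dvd_coefs_expp p t (R S : {poly int}) : prime p -> (0 < t)%N ->
  dvd_coefs (p%:Z ^+ t) (R - S) -> dvd_coefs (p%:Z ^+ t.+1) (R ^+ p - S ^+ p).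
Proof.
move=> p_pr t_gt0 dRS; have p_gt1 := prime_gt1 p_pr.
have -> : R = S + (R - S) by rewrite addrC subrK.
rewrite exprDn big_ord_recl subn0 expr0 mulr1 bin0 mulr1n [S ^+ p + _]addrC addrK.
apply: dvd_coefs_sum => -[j /= jp] _; rewrite /bump leq0n add1n.
have [jp'|jE] := ltnP j.+1 p.
  rewrite exprSr; apply: dvd_coefsMn; first by rewrite dvdzE /= prime_dvd_bin.
  by apply/dvd_coefsMl; rewrite exprS; apply: dvd_coefsMr.
have -> : j.+1 = p by lia.
rewrite binn -[_ ^+ t.+1]mulr1; apply: dvd_coefsMn => //; apply: dvd_coefsMl.
by apply: dvd_coefs_trans (dvd_coefsX _ _ p dRS); rewrite -exprM dvdz_exp2l //; nia.
Qed.

Lemma dvd_coefs_1subX_Frobenius p s w : prime p -> (0 < s)%N ->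
  dvd_coefs (p%:Z ^+ s) ((1 - 'X) ^+ (p ^ s * w) - (1 - 'X^p) ^+ (p ^ s.-1 * w)).
Proof.
move=> p_pr; case: s => // s _; rewrite !exprM; apply: dvd_coefs_subX.
elim: s => [|s IH].
  by rewrite expn1 expn0 !expr1; apply: dvd_coefs_1subX_prime.
rewrite [in _ ^+ (p ^ s.+2)]expnSr [in _ ^+ (p ^ s.+1)]expnSr !exprM.
exact: dvd_coefs_expp.
Qed.

Definition cong_upto (d : int) (N : nat) (P Q : {poly int}) :=
  forall i, (i <= N)%N -> (d %| (P - Q)`_i)%Z.

Section CongruenceUpToDegree.

Variables (d : int) (N : nat).
Implicit Types P Q R : {poly int}.

Lemma cong_upto_refl P : cong_upto d N P P.
Proof. by move=> i _; rewrite subrr coef0. Qed.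

Lemma cong_upto_sym P Q : cong_upto d N P Q -> cong_upto d N Q P.
Proof. by move=> PQ i iN; rewrite -opprB coefN rpredN PQ. Qed.

Lemma cong_upto_trans P Q R :
  cong_upto d N P Q -> cong_upto d N Q R -> cong_upto d N P R.
Proof.
by move=> PQ QR i iN; rewrite -(subrKA Q) coefD rpredD ?PQ ?QR.
Qed.

Lemma cong_upto_dvd_coefs P Q : dvd_coefs d (P - Q) -> cong_upto d N P Q.
Proof. by move=> dPQ i _. Qed.

Lemma cong_uptoM P Q P' Q' :
  cong_upto d N P Q -> cong_upto d N P' Q' -> cong_upto d N (P * P') (Q * Q').
Proof.
have dvd_coefM R S i : cong_upto d N R 0 -> (i <= N)%N -> (d %| (R * S)`_i)%Z.
  move=> R0 iN; rewrite coefM rpred_sum // => j _; apply: dvdz_mulr.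
  by rewrite -[R]subr0 R0 // (leq_trans (leq_ord j)).
move=> PQ PQ' i iN.
have -> : P * P' - Q * Q' = (P - Q) * P' + (P' - Q') * Q by ring.
by rewrite coefD rpredD // dvd_coefM // => k kN; rewrite subr0 ?PQ ?PQ'.
Qed.

Lemma cong_uptoMl P P' Q' : cong_upto d N P' Q' -> cong_upto d N (P * P') (P * Q').
Proof. exact/cong_uptoM/cong_upto_refl. Qed.

Lemma cong_uptoMr P Q P' : cong_upto d N P Q -> cong_upto d N (P * P') (Q * P').
Proof. by move/cong_uptoM; apply; apply: cong_upto_refl. Qed.

Lemma cong_upto_prod I (r : seq I) (C : pred I) (F G : I -> {poly int}) :
  (forall i, C i -> cong_upto d N (F i) (G i)) ->
  cong_upto d N (\prod_(i <- r | C i) F i) (\prod_(i <- r | C i) G i).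
Proof.
apply: (big_ind2 (cong_upto d N)); first exact: cong_upto_refl.
exact: cong_uptoM.
Qed.

Lemma cong_upto_comp P Q q : (0 < q)%N ->
  cong_upto d N P Q -> cong_upto d N (P \Po 'X^q) (Q \Po 'X^q).
Proof.
move=> q_gt0 PQ i iN; rewrite -comp_polyB coef_comp_poly_Xn //.
by case: ifP => // _; apply/PQ/(leq_trans (leq_div _ _) iN).
Qed.

End CongruenceUpToDegree.

Lemma cong_upto_dvd d e N P Q : (e %| d)%Z -> cong_upto d N P Q -> cong_upto e N P Q.
Proof. by move=> ed PQ i iN; apply: dvdz_trans ed (PQ i iN). Qed.

Lemma cong_upto0_coef N P Q i : cong_upto 0 N P Q -> (i <= N)%N -> P`_i = Q`_i.
Proof. by move=> PQ /PQ; rewrite dvd0z coefB subr_eq0 => /eqP. Qed.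

(* [binser k M] is the power series of (1 - X)^-k truncated below degree M. *)
Definition binser (k M : nat) : {poly int} :=
  \sum_(j < M) 'C(j + k - 1, j)%:R *: 'X^j.

Lemma coef_binser k M i :
  (binser k M)`_i = if (i < M)%N then 'C(i + k - 1, i)%:R else 0.
Proof. by rewrite /binser -(poly_def M (fun j => 'C(j + k - 1, j)%:R)) coef_poly. Qed.

Section BinomialSeries.

Variables (N M : nat).
Hypothesis NM : (N < M)%N.

Lemma binser_trunc k M' : (N < M')%N -> cong_upto 0 N (binser k M) (binser k M').
Proof.
move=> NM' i iN; rewrite coefB !coef_binser.
by rewrite (leq_ltn_trans iN NM) (leq_ltn_trans iN NM') subrr.
Qed.

Lemma binser0 : cong_upto 0 N (binser 0 M) 1.
Proof.
move=> i iN; rewrite coefB coef_binser coef1 (leq_ltn_trans iN NM).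
by case: i iN => [|i] _; rewrite ?bin0 ?addn0 ?subn1 ?bin_small ?subrr.
Qed.

Lemma mul_1subX_binserS k : cong_upto 0 N ((1 - 'X) * binser k.+1 M) (binser k M).
Proof.
move=> i iN; rewrite mulrBl mul1r !coefB coefXM !coef_binser (leq_ltn_trans iN NM).
case: i iN => [|i] iN /=; first by rewrite !bin0 subr0 subrr.
rewrite (ltnW (leq_ltn_trans iN NM)).
by rewrite !(addSn, addnS) !subn1 /= binS natrD addrK subrr.
Qed.

Lemma mul_1subX_exp_binser k : cong_upto 0 N ((1 - 'X) ^+ k * binser k M) 1.
Proof.
elim: k => [|k IH]; first by rewrite expr0 mul1r; apply: binser0.
rewrite exprSr -mulrA; apply: cong_upto_trans IH.
exact/cong_uptoMl/mul_1subX_binserS.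
Qed.

End BinomialSeries.

Lemma binser_comp_Xn k q M N : (N < q)%N -> (0 < M)%N ->
  cong_upto 0 N (binser k M \Po 'X^q) 1.
Proof.
move=> Nq M_gt0 i iN; have q_gt0 := leq_ltn_trans (leq0n N) Nq.
rewrite coefB coef_comp_poly_Xn // coef1; case: i iN => [|i] iN.
  by rewrite dvdn0 div0n coef_binser M_gt0 bin0 subrr.
by rewrite gtnNdvd ?(leq_ltn_trans iN Nq) ?subrr.
Qed.

Lemma Atrunc_binser m k N :
  Atrunc m k N = \prod_(i < N.+1) (binser k N.+1 \Po 'X^(m ^ i)).
Proof.
apply: eq_bigr => i _; rewrite linear_sum; apply: eq_bigr => j _.
by rewrite linearZ /= comp_Xn_poly exprM.
Qed.

Lemma Atrunc_rec m k N : Atrunc m k N =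
  binser k N.+1 * ((\prod_(i < N) (binser k N.+1 \Po 'X^(m ^ i))) \Po 'X^m).
Proof.
rewrite Atrunc_binser big_ord_recl expn0 expr1 comp_polyXr rmorph_prod.
congr (_ * _); apply: eq_bigr => i _.
by rewrite /= -comp_polyA comp_Xn_poly -exprM /bump leq0n add1n expnS.
Qed.

Lemma coef_Atrunc m k n N : (1 < m)%N -> (n <= N)%N -> (Atrunc m k N)`_n = A m k n.
Proof.
move=> m_gt1 nN; apply: cong_upto0_coef (leqnn n); rewrite !Atrunc_binser.
pose F := fun M i => binser k M \Po 'X^(m ^ i).
have F_trunc i : cong_upto 0 n (F N.+1 i) (F n.+1 i).
  by apply/cong_upto_comp/binser_trunc; rewrite ?expn_gt0 ?(ltnW m_gt1).
have F_high i : (n < i)%N -> cong_upto 0 n (F N.+1 i) 1.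
  by move=> ni; apply: binser_comp_Xn => //; apply: ltn_trans ni (ltn_expl _ m_gt1).
rewrite -!(big_mkord (fun=> true) (F _)) (@big_cat_nat _ _ _ n.+1 0 N.+1) //=.
rewrite -[X in cong_upto _ _ _ X]mulr1; apply: cong_uptoM.
  by apply: cong_upto_prod => i _; apply: F_trunc.
rewrite big_nat_cond -[X in cong_upto _ _ _ X]
  (@big1_eq _ 1 *%R _ (index_iota n.+1 N.+1) (fun i => (n < i < N.+1)%N && true)).
by apply: cong_upto_prod => i /andP[/andP[/F_high]].
Qed.

Lemma Atrunc_cong_comp_Xp p s w k e N :
  prime p -> (0 < s)%N -> (k + e = p ^ s * w)%N ->
  exists D, cong_upto (p%:Z ^+ s) N (Atrunc p k N) ((1 - 'X) ^+ e * (D \Po 'X^p)).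
Proof.
move=> p_pr s_gt0 kE; have p_gt0 := prime_gt0 p_pr.
set K := (p ^ s.-1 * w)%N; set B := binser k N.+1; set E := binser K N.+1 \Po 'X^p.
exists (binser K N.+1 * \prod_(i < N) (B \Po 'X^(p ^ i))).
rewrite Atrunc_rec rmorphM /= mulrA; apply: cong_uptoMr; rewrite -/E.
have invB : cong_upto 0 N ((1 - 'X) ^+ k * B) 1 by apply: mul_1subX_exp_binser.
have invE : cong_upto 0 N ((1 - 'X^p) ^+ K * E) 1.
  have -> : (1 - 'X^p) ^+ K * E = ((1 - 'X) ^+ K * binser K N.+1) \Po 'X^p.
    by rewrite rmorphM rmorphXn rmorphB rmorph1 /= comp_polyX.
  rewrite -[X in cong_upto _ _ _ X](rmorph1 (comp_poly ('X^p : {poly int}))).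
  exact/cong_upto_comp/mul_1subX_exp_binser.
have frob : cong_upto (p%:Z ^+ s) N ((1 - 'X) ^+ (k + e)) ((1 - 'X^p) ^+ K).
  by rewrite kE; apply/cong_upto_dvd_coefs/dvd_coefs_1subX_Frobenius.
apply: (@cong_upto_trans _ _ _ (B * ((1 - 'X^p) ^+ K * E))).
  rewrite -[X in cong_upto _ _ X _]mulr1; apply/cong_uptoMl/cong_upto_sym.
  exact: cong_upto_dvd (dvdz0 _) invE.
apply: (@cong_upto_trans _ _ _ (B * ((1 - 'X) ^+ (k + e) * E))).
  exact/cong_uptoMl/cong_uptoMr/cong_upto_sym.
rewrite exprD -mulrA mulrCA mulrA -[X in cong_upto _ _ _ X]mul1r.
apply: cong_uptoMr; exact: cong_upto_dvd (dvdz0 _) invB.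
Qed.

Lemma dvdn_mulnDsub p n i j : (i < p)%N -> (j < p)%N -> (i <= p * n + j)%N ->
  (p %| p * n + j - i)%N = (i == j).
Proof.
move=> ip jp ipnj; case: (ltngtP i j) => [ij|ji|->]; last by rewrite addnK dvdn_mulr.
  rewrite -addnBA ?(ltnW ij) // dvdn_addr ?dvdn_mulr // gtnNdvd ?subn_gt0 //.
  exact: leq_ltn_trans (leq_subr i j) jp.
case: n ipnj => [|n]; rewrite ?muln0 ?mulnS => ipnj; first by lia.
have -> : (p + p * n + j - i = p * n + (p + j - i))%N by lia.
by rewrite dvdn_addr ?dvdn_mulr // gtnNdvd //; lia.
Qed.

Lemma coef_1subX_exp_comp_Xn p e n j (D : {poly int}) : (e < p)%N -> (j < p)%N ->
  ((1 - 'X) ^+ e * (D \Po 'X^p))`_(p * n + j) = (-1) ^+ j * 'C(e, j)%:R * D`_n.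
Proof.
move=> ep jp; have p_gt0 : (0 < p)%N by apply: leq_ltn_trans jp.
have jpnj : (j < (p * n + j).+1)%N by rewrite ltnS leq_addl.
rewrite coefM (bigD1 (Ordinal jpnj)) //= big1 ?addr0.
  by rewrite coef_1subX_exp addnK coef_comp_poly_Xn // dvdn_mulr // mulKn.
move=> [i /= ipnj] /eqP ij; rewrite coef_1subX_exp.
have [ie|ei] := leqP i e; last by rewrite bin_small // mulr0 mul0r.
rewrite coef_comp_poly_Xn // dvdn_mulnDsub ?(leq_ltn_trans ie ep) //.
by case: eqP => [ijE|]; [case: ij; apply: val_inj | rewrite mulr0].
Qed.

Lemma A_cong_digit p s w k n j : prime p -> (0 < s)%N -> (k + p.-1 = p ^ s * w)%N ->
  (j < p)%N ->
  (p%:Z ^+ s %| A p k (p * n + j) - (-1) ^+ j * 'C(p.-1, j)%:R * A p k (p * n))%Z.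
Proof.
move=> p_pr s_gt0 kE jp; have p_gt0 := prime_gt0 p_pr.
have [D cAD] := Atrunc_cong_comp_Xp _ _ _ _ _ (p * n + j) p_pr s_gt0 kE.
have e_lt_p : (p.-1 < p)%N by rewrite ltn_predL.
have congA i : (i <= p * n + j)%N ->
    (p%:Z ^+ s %| A p k i - ((1 - 'X) ^+ p.-1 * (D \Po 'X^p))`_i)%Z.
  by move=> iN; rewrite -(coef_Atrunc _ _ _ (p * n + j)) ?prime_gt1 // -coefB cAD.
have dy := congA _ (leqnn _); have dx := congA _ (leq_addr j (p * n)).
rewrite coef_1subX_exp_comp_Xn // in dy.
have := coef_1subX_exp_comp_Xn p p.-1 n 0 D e_lt_p p_gt0.
rewrite addn0 expr0 bin0 !mul1r => cx; rewrite cx in dx.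
set a : int := (-1) ^+ j * _ in dy *.
set x := A p k (p * n) in dx *; set y := A p k (p * n + j) in dy *.
have -> : y - a * x = (y - a * D`_n) - a * (x - D`_n) by ring.
by rewrite rpredB ?dvdz_mull.
Qed.

Lemma nu_eq_of_dvd_sub p s (a x y : int) vx vy : prime p -> coprimez p%:Z a ->
  (p%:Z ^+ s %| y - a * x)%Z -> nu p x = Some vx -> nu p y = Some vy ->
  (vx <= s)%N -> (vy <= s)%N -> vx = vy.
Proof.
move=> p_pr pa dyx; rewrite /nu.
case: eqP => // /eqP x0 [<-]; case: eqP => // /eqP y0 [<-] xs ys.
have dvd_logn z t : z != 0 -> (p%:Z ^+ t %| z)%Z = (t <= logn p `|z|)%N.
  by move=> z0; rewrite dvdzE abszX pfactor_dvdn // absz_gt0.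
have dvdxy t : (t <= s)%N -> (p%:Z ^+ t %| x)%Z = (p%:Z ^+ t %| y)%Z.
  move=> ts; have dyx_t := dvdz_trans (dvdz_exp2l p%:Z ts) dyx.
  by rewrite -(subrK (a * x) y) (rpredDl _ dyx_t) Gauss_dvdzr // coprimezXl.
apply/eqP; rewrite eqn_leq; apply/andP; split.
  by rewrite -dvd_logn // -dvdxy // dvd_logn.
by rewrite -dvd_logn // dvdxy // dvd_logn.
Qed.

Lemma prime_coprime_bin_pred p j : prime p -> (j <= p.-1)%N -> coprime p 'C(p.-1, j).
Proof.
move=> p_pr jp; rewrite prime_coprime //; apply: contraL (p_pr) => p_dvd_bin.
have p_dvd_fact : (p %| (p.-1)`!)%N by rewrite -(bin_fact jp) dvdn_mulr.
by rewrite Wilson ?prime_gt1 // -addn1 dvdn_addr // dvdn1 gtn_eqF ?prime_gt1.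
Qed.

Close Scope ring_scope.

Theorem theorem3p1 (p u s : nat) :
  prime p -> 3 <= p -> 1 <= u <= p - 1 -> 2 <= s ->
  (forall m : nat, u * p ^ s < m ->
     exists v : nat, nu p (A p ((p - 1) * (u * p ^ s - 1)) m) = Some v /\ v <= s) ->
  forall n : nat, u * p ^ s < n ->
  forall j : nat, j <= p - 1 ->
    nu p (A p ((p - 1) * (u * p ^ s - 1)) (p * n + j)) =
    nu p (A p ((p - 1) * (u * p ^ s - 1)) (p * n)).
Proof.
move=> p_pr _ /andP[u_gt0 _] s_ge2 val_le_s n n_gt j j_le.
have p_gt0 := prime_gt0 p_pr.
set k := (p - 1) * (u * p ^ s - 1).
have kE : k + p.-1 = p ^ s * ((p - 1) * u).
  have up_gt0 : 0 < u * p ^ s by rewrite muln_gt0 u_gt0 expn_gt0 p_gt0.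
  by rewrite /k -subn1 -mulnSr !subn1 prednK // mulnA mulnC.
have jp : j < p by lia.
have cong := A_cong_digit _ _ _ _ n _ p_pr (ltnW s_ge2) kE jp.
have unit : coprimez p ((-1) ^+ j * 'C(p.-1, j)%:R)%R.
  by rewrite coprimezE abszMsign natz prime_coprime_bin_pred // -subn1.
have pn_gt : u * p ^ s < p * n by apply: leq_trans n_gt (leq_pmull _ p_gt0).
have [vx [Ex vx_le]] := val_le_s _ pn_gt.
have [vy [Ey vy_le]] := val_le_s _ (leq_trans pn_gt (leq_addr j _)).
rewrite Ex Ey; congr Some; symmetry.
by apply: nu_eq_of_dvd_sub p_pr unit cong Ex Ey _ _.
Qed.
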